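(* For any $k \ge 2$, \[ O(k, 2k-2) = \frac{C_{k-1} + C_{(k-2)/2}}{2}, \] where $C_n = \frac{1}{n+1}\binom{2n}{n}$ for integers $n\ge 0$ and $C_n = 0$ if $n$ is not an integer. Moreover, $O(k, 2k-3) = 2E(k, 2k-2)$.
   Context: For a binary word $w = w_1\cdots w_n$, let $A = \{i : w_i = 0\}$, $|A|=a$; $G(w)$ is the permutation of $[n]$ whose first $a$ entries are the elements of $A$ in increasing order followed by the elements of $[n]\setminus A$ in increasing order. $w$ is called odd (resp. even) if $G(w)$ has an odd (resp. even) number of inversions. For $k\ge1$, $m\ge0$, $\mathcal{B}(k,m)$ is the set of binary words of length $m$ that avoid (do not contain as a not-necessarily-contiguous subsequence) every word $0^j1^{k-j}$, $j\in\{0,\dots,k\}$; $O(k,m)$ and $E(k,m)$ are the numbers of odd and even words in $\mathcal{B}(k,m)$ respectively. *)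

From mathcomp Require Import all_boot all_order all_algebra.
Set Implicit Arguments. Unset Strict Implicit. Unset Printing Implicit Defensive.
Import GRing.Theory Num.Theory.

(* Binary words: letters are bool, with 0 encoded as false and 1 as true. *)

Definition forb (k j : nat) : seq bool := nseq j false ++ nseq (k - j) true.

Definition avoids_all (k : nat) (w : seq bool) : bool :=
  [forall j : 'I_k.+1, ~~ subseq (forb k j) w].

(* G(w) as a sequence (one-line notation of a permutation of [n] = {1..n}):
   positions of 0's in increasing order followed by positions of 1's. *)
Definition Gperm (w : seq bool) : seq nat :=
  [seq i <- iota 1 (size w) | nth false w i.-1 == false] ++
  [seq i <- iota 1 (size w) | nth false w i.-1 == true].

Definition inversions (s : seq nat) : nat :=
  #|[set pq : 'I_(size s) * 'I_(size s) |
       (pq.1 < pq.2)%N && (nth 0 s pq.2 < nth 0 s pq.1)%N]|.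

Definition odd_word (w : seq bool) : bool := odd (inversions (Gperm w)).

Definition Ocount (k m : nat) : nat :=
  #|[set w : m.-tuple bool | avoids_all k w && odd_word w]|.
Definition Ecount (k m : nat) : nat :=
  #|[set w : m.-tuple bool | avoids_all k w && ~~ odd_word w]|.

Definition catalan (n : nat) : rat := ('C(n.*2, n))%:R / (n.+1)%:R.

(* C_{(k-2)/2}: zero when (k-2)/2 is not an integer, i.e. when k is odd. *)
Definition catalan_half_km2 (k : nat) : rat :=
  if odd k then 0%R else catalan ((k - 2)./2).

(* A word w avoids every 0^j 1^(k-j) iff at every cut point t the
   number of 0s before t plus the number of 1s after t is < k; when w has
   k-1-d letters 1 this says that w is a ballot word with initial credit d
   (no prefix has more than d extra 0s).  Length counting then shows that
   the avoiders of length 2k-2 are exactly the Dyck words of semilength k-1,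
   while those of length 2k-3 are the Dyck words of semilength k-1 with
   either their final 0 or their initial 1 removed.
   The inversion number of G(w) is winv w, the number of pairs 1 ... 0 in w.
   For ballot words with p ones and q zeros we consider the number T(p,q)
   and the signed sum S(p,q) of (-1)^winv.  Removing the last letter gives
   recurrences for T and S; T(n,n) is the Catalan number C_n, and S(p,q)
   has an explicit closed form in terms of T, which gives S(n,n).  Since
   twice the number of odd words is T - S, and the two bijections above
   shift winv by k-1, both identities follow. *)

From mathcomp Require Import all_boot all_order all_algebra zify ring.
Import GRing.Theory Num.Theory.
Set Implicit Arguments. Unset Strict Implicit. Unset Printing Implicit Defensive.

Definition ones (w : seq bool) : nat := count id w.
Definition zeros (w : seq bool) : nat := count negb w.

Lemma count_mem_bool (b : bool) w : count_mem b w = if b then ones w else zeros w.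
Proof. by case: b; apply: eq_count => -[]. Qed.

Lemma size_ones_zeros w : size w = ones w + zeros w.
Proof. by rewrite -(count_predC id). Qed.

Lemma ones_take_drop t w : ones w = ones (take t w) + ones (drop t w).
Proof. by rewrite /ones -count_cat cat_take_drop. Qed.

Lemma ones_rcons w b : ones (rcons w b) = ones w + b.
Proof. by rewrite /ones -cats1 count_cat /= addn0. Qed.

Lemma zeros_rcons w b : zeros (rcons w b) = zeros w + ~~ b.
Proof. by rewrite /zeros -cats1 count_cat /= addn0. Qed.

Lemma subseq_nseq (T : eqType) (x : T) j s : subseq (nseq j x) s = (j <= count_mem x s).
Proof.
elim: s j => [|y s IH] [|j] //=.
rewrite eq_sym; case: eqP => _; last rewrite -[x :: _]/(nseq j.+1 x); by rewrite IH.
Qed.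

Lemma subseq_nseq_cat (T : eqType) (x : T) j s w :
  subseq (nseq j x ++ s) w <->
  exists t, j <= count_mem x (take t w) /\ subseq s (drop t w).
Proof.
have split0 w' : subseq s w' <-> exists t, 0 <= count_mem x (take t w') /\ subseq s (drop t w').
  split=> [sub_s | [t [_ sub_s]]]; first by exists 0; rewrite drop0.
  exact: subseq_trans sub_s (drop_subseq _ _).
elim: w j => [|y w IH] [|j] //; first by split=> [|[t []]].
have first_letter i : (exists t, i < count_mem x (take t (y :: w)) /\ subseq s (drop t (y :: w)))
    <-> exists t, (if y == x then i else i.+1) <= count_mem x (take t w) /\ subseq s (drop t w).
  split=> [[[|t] []] | [t []]] // le_i sub_s; [exists t | exists t.+1]; split=> //;
    by move: le_i; rewrite /=; case: (y == x).
rewrite first_letter [subseq _ _]/= eq_sym.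
case: eqP => _; last exact: (IH j.+1).
by case: j => [|j]; [apply: split0 | apply: IH].
Qed.

Lemma avoidsP k w :
  avoids_all k w <-> forall t, zeros (take t w) + ones (drop t w) < k.
Proof.
split=> [/forallP avoid t | small].
  rewrite ltnNge; apply/negP => big.
  have lt_jk : minn k (zeros (take t w)) < k.+1 by rewrite ltnS geq_minl.
  move/negP: (avoid (Ordinal lt_jk)); apply; apply/subseq_nseq_cat.
  exists t; split; first by rewrite count_mem_bool geq_minr.
  rewrite subseq_nseq count_mem_bool /=; lia.
apply/forallP => -[j lt_jk]; apply/negP; rewrite /forb => /subseq_nseq_cat [t []].
rewrite /= subseq_nseq !count_mem_bool => le_j le_kj.
have := small t; lia.
Qed.

Fixpoint ballot (d : nat) (w : seq bool) : bool :=
  if w is b :: w' then (if b then ballot d.+1 w' else (0 < d) && ballot d.-1 w')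
  else true.

Lemma ballotP d w : ballot d w <-> forall t, zeros (take t w) <= ones (take t w) + d.
Proof.
elim: w d => [|b w IH] d /=; first by split=> // t.
rewrite /zeros /ones in IH *; case: b.
  apply: (iff_trans (IH d.+1)); split=> prefix => [[|t] | t] //=;
    by have := prefix t.+1; have := prefix t; rewrite /=; lia.
split=> [/andP [d_pos /IH prefix] [|t] | prefix] //=.
  by have := prefix t; rewrite -subn1; lia.
apply/andP; split; first by have := prefix 1; rewrite /= take0 /=; lia.
by apply/IH => t; have := prefix t.+1; have := prefix 1; rewrite /= take0 /= -subn1; lia.
Qed.

Lemma ballot_rcons d w b :
  ballot d (rcons w b) = ballot d w && (zeros (rcons w b) <= ones (rcons w b) + d).
Proof.
elim: w d => [|x w IH] d /=; first by case: b; case: d.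
case: x => /=; rewrite IH /zeros /ones /=.
  by congr (_ && _); apply/idP/idP; lia.
by case: d => [|d] //=; congr (_ && _); apply/idP/idP; lia.
Qed.

Lemma ballot_counts d w : ballot d w -> zeros w <= ones w + d.
Proof. by move/ballotP/(_ (size w)); rewrite take_size. Qed.

Lemma avoids_ballot k d w : ones w + d.+1 = k -> avoids_all k w = ballot d w.
Proof.
move=> def_k; apply/idP/idP => [/avoidsP small | /ballotP prefix].
  by apply/ballotP => t; have := small t; have := ones_take_drop t w; lia.
by apply/avoidsP => t; have := prefix t; have := ones_take_drop t w; lia.
Qed.

Lemma avoids_counts k w : avoids_all k w -> ones w < k /\ zeros w < k.
Proof.
move/avoidsP => small; split; first by have := small 0; rewrite take0 drop0.
by have := small (size w); rewrite take_size drop_size /ones /= addn0.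
Qed.

Definition ballot_word d p q w := [&& ones w == p, zeros w == q & ballot d w].

Lemma avoids_even n w : size w = n + n -> avoids_all n.+1 w = ballot_word 0 n n w.
Proof.
rewrite size_ones_zeros => size_w; apply/idP/and3P => [avoid | [/eqP ones_n /eqP zeros_n]].
  have [lt_ones lt_zeros] := avoids_counts avoid.
  have ones_n : ones w = n by lia.
  rewrite -(avoids_ballot (k := n.+1)) ?ones_n ?addn1 //; split=> //; apply/eqP; lia.
by rewrite (avoids_ballot (d := 0)) ?ones_n ?addn1.
Qed.

Lemma avoids_odd n w : size w = n.+1 + n ->
  avoids_all n.+2 w = ballot_word 0 n.+1 n w || ballot_word 1 n n.+1 w.
Proof.
rewrite size_ones_zeros => size_w; apply/idP/orP => [avoid | ].
  have [lt_ones lt_zeros] := avoids_counts avoid.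
  have [ones_n | ones_n] : ones w = n.+1 \/ ones w = n by lia.
  - left; rewrite /ballot_word -(avoids_ballot (k := n.+2)) ?ones_n ?addn1 ?eqxx //=.
    apply/eqP; lia.
  - right; rewrite /ballot_word -(avoids_ballot (k := n.+2)) ?ones_n ?addn2 ?eqxx //=.
    apply/eqP; lia.
by case=> /and3P [/eqP ones_w _ ballot_w];
  [rewrite (avoids_ballot (d := 0)) | rewrite (avoids_ballot (d := 1))]; rewrite ?ones_w ?addn1 ?addn2.
Qed.

Fixpoint winv (w : seq bool) : nat :=
  if w is b :: w' then (if b then zeros w' else 0) + winv w' else 0.

(* Appending a 0 creates one new pair 1 ... 0 for every 1 already present. *)
Lemma winv_rcons w b : winv (rcons w b) = winv w + (if b then 0 else ones w).
Proof.
elim: w => [|x w IH] /=; first by case: b.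
rewrite {}IH /zeros /ones -!cats1 !count_cat; case: x; case: b => /=; lia.
Qed.

Fixpoint ninv (s : seq nat) : nat :=
  if s is x :: s' then count (fun y => y < x) s' + ninv s' else 0.

Lemma inversionsE s : inversions s =
  \sum_(i < size s) \sum_(j < size s) ((i < j) && (nth 0 s j < nth 0 s i)).
Proof.
rewrite /inversions -sum1_card pair_bigA /= big_mkcond /=.
by apply: eq_bigr => -[i j] _; rewrite inE /=; case: ifP.
Qed.

Lemma inversions_ninv s : inversions s = ninv s.
Proof.
elim: s => [|x s IH]; first by rewrite inversionsE big_ord0.
rewrite inversionsE /= big_ord_recl big_ord_recl /= add0n -IH inversionsE; congr (_ + _).
  elim: s {IH} => [|y s IH]; first by rewrite big_ord0.
  by rewrite big_ord_recl /= IH.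
by apply: eq_bigr => i _; rewrite big_ord_recl.
Qed.

Definition cross (a b : seq nat) : nat := \sum_(x <- a) count (fun y => y < x) b.

Lemma ninv_cat a b : ninv (a ++ b) = ninv a + ninv b + cross a b.
Proof.
elim: a => [|x a IH] /=; first by rewrite /cross big_nil addn0.
by rewrite IH /cross big_cons count_cat; lia.
Qed.

Lemma ninv_sorted s : sorted ltn s -> ninv s = 0.
Proof.
elim: s => //= x s IH sorted_xs; rewrite IH ?(path_sorted sorted_xs) // addn0.
rewrite (eq_in_count (a2 := pred0)) ?count_pred0 // => y.
by move/(allP (order_path_min ltn_trans sorted_xs)) => /ltnW/leq_gtF.
Qed.

Lemma cross_catl a1 a2 b : cross (a1 ++ a2) b = cross a1 b + cross a2 b.
Proof. exact: big_cat. Qed.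

Lemma cross_catr a b1 b2 : cross a (b1 ++ b2) = cross a b1 + cross a b2.
Proof. by rewrite /cross -big_split; apply: eq_bigr => x _; rewrite count_cat. Qed.

(* Positions (1-based) of the letter b in w; G(w) lists the positions of 0
   followed by those of 1. *)
Definition positions (w : seq bool) (b : bool) : seq nat :=
  [seq i <- iota 1 (size w) | nth false w i.-1 == b].

Lemma positions_rcons w b c :
  positions (rcons w b) c = positions w c ++ (if b == c then [:: (size w).+1] else [::]).
Proof.
rewrite /positions size_rcons -[(size w).+1]addn1 iotaD add1n filter_cat /= nth_rcons ltnn eqxx.
rewrite addn1; congr (_ ++ _); apply: eq_in_filter => i; rewrite mem_iota => /andP [gt0_i lt_i].
by rewrite nth_rcons; have -> : i.-1 < size w by lia.
Qed.

Lemma positions_sorted w b : sorted ltn (positions w b).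
Proof. exact: (sorted_filter ltn_trans _ (iota_ltn_sorted _ _)). Qed.

Lemma positions_le_size w b i : i \in positions w b -> i <= size w.
Proof. by rewrite mem_filter mem_iota => /and3P [_ _]; lia. Qed.

Lemma size_positions_true w : size (positions w true) = ones w.
Proof.
elim/last_ind: w => [|w b IH] //.
by rewrite positions_rcons size_cat IH ones_rcons; case: b.
Qed.

(* The only inversions of G(w) are a 0-position after a 1-position. *)
Lemma cross_positions w : cross (positions w false) (positions w true) = winv w.
Proof.
elim/last_ind: w => [|w b IH]; first by rewrite /cross big_nil.
have above_none c : count (fun x => (size w).+1 < x) (positions w c) = 0.
  by rewrite (eq_in_count (a2 := pred0)) ?count_pred0 // => i /positions_le_size /leqW /leq_gtF.
have below_all : count (fun y => y < (size w).+1) (positions w true) = ones w.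
  by rewrite -size_positions_true; apply/eqP; rewrite -all_count; apply/allP => i /positions_le_size.
have cross_nilr a : cross a [::] = 0 by rewrite /cross big1.
have cross1r a y : cross a [:: y] = count (fun x => y < x) a.
  by rewrite /cross; elim: a => [|x a IH']; rewrite ?big_nil ?big_cons //= IH' addn0.
rewrite !positions_rcons winv_rcons cross_catl !cross_catr IH.
by case: b; rewrite /= ?cross_nilr ?cross1r ?above_none /cross ?big_nil ?big_seq1 ?below_all ?addn0.
Qed.

Lemma Gperm_inversions w : inversions (Gperm w) = winv w.
Proof.
rewrite inversions_ninv [Gperm w]/(positions w false ++ positions w true) ninv_cat.
by rewrite !ninv_sorted ?positions_sorted ?cross_positions.
Qed.

Fixpoint words (m : nat) : seq (seq bool) :=
  if m is m'.+1 then [seq true :: w | w <- words m'] ++ [seq false :: w | w <- words m']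
  else [:: [::]].

Lemma mem_words m w : (w \in words m) = (size w == m).
Proof.
elim: m w => [|m IH] [|b w] //=; rewrite mem_cat.
  by apply/negbTE/norP; split; apply/mapP => -[].
have cons_inj (c : bool) : injective (cons c) by move=> ? ? [].
have other_letter (c : bool) v : (c :: v \in [seq ~~ c :: u | u <- words m]) = false.
  by apply/negbTE/mapP => -[u _ []]; case: c.
case: b; rewrite (mem_map (cons_inj _)) IH eqSS.
  by rewrite (other_letter true) orbF.
by rewrite (other_letter false).
Qed.

Lemma uniq_words m : uniq (words m).
Proof.
elim: m => [|m IH] //=; have cons_inj (c : bool) : injective (cons c) by move=> ? ? [].
rewrite cat_uniq !map_inj_uniq // IH andbT /=.
by apply/hasPn => _ /mapP [w _ ->]; apply/mapP => -[].
Qed.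

Lemma card_words (P : pred (seq bool)) m :
  #|[set w : m.-tuple bool | P w]| = count P (words m).
Proof.
rewrite cardE size_filter -enumT.
rewrite (@eq_count _ _ (preim val P)) => [|w]; last by rewrite /= in_set.
rewrite -(count_map val P); apply/permP: P; apply: uniq_perm.
- by rewrite map_inj_uniq ?enum_uniq //; exact: val_inj.
- exact: uniq_words.
move=> w; rewrite mem_words; apply/mapP/eqP => [[t _ ->] | size_w].
  by rewrite size_tuple.
by exists (Tuple (introT eqP size_w)); rewrite ?mem_enum.
Qed.

Lemma perm_words_rcons m : perm_eq (words m.+1)
  ([seq rcons w true | w <- words m] ++ [seq rcons w false | w <- words m]).
Proof.
elim: m => [|m IH] //.
apply: perm_trans (perm_cat (perm_map (cons true) IH) (perm_map (cons false) IH)) _.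
by rewrite [words m.+1]/= !map_cat -!map_comp perm_catACA.
Qed.

Definition ballot_words d p q : seq (seq bool) :=
  [seq w <- words (p + q) | ballot_word d p q w].

Lemma ballot_word_rcons_one d p q w : ballot_word d p q (rcons w true) =
  if p is p'.+1 then ballot_word d p' q w && (q <= p + d) else false.
Proof.
rewrite /ballot_word ballot_rcons ones_rcons zeros_rcons addn1 addn0.
case: p => [|p] //; rewrite eqSS.
by case: eqP => [->|] //=; case: eqP => [->|] //=; rewrite andbT.
Qed.

Lemma ballot_word_rcons_zero d p q w : ballot_word d p q (rcons w false) =
  if q is q'.+1 then ballot_word d p q' w && (q <= p + d) else false.
Proof.
rewrite /ballot_word ballot_rcons ones_rcons zeros_rcons addn1 addn0.
case: q => [|q]; first by rewrite andbF.
by rewrite eqSS; case: eqP => [->|] //=; case: eqP => [->|] //=; rewrite andbT.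
Qed.

Lemma filter_andr (T : Type) (a : pred T) (c : bool) s :
  [seq x <- s | a x && c] = if c then filter a s else [::].
Proof.
case: c; last by rewrite (eq_filter (a2 := pred0)) ?filter_pred0 // => x; rewrite andbF.
by apply: eq_filter => x; rewrite andbT.
Qed.

Lemma ballot_words_rcons d p q : 0 < p + q ->
  perm_eq (ballot_words d p q)
    (if q <= p + d then
       [seq rcons w true | w <- if p is p'.+1 then ballot_words d p' q else [::]] ++
       [seq rcons w false | w <- if q is q'.+1 then ballot_words d p q' else [::]]
     else [::]).
Proof.
move=> pq_gt0; rewrite {1}/ballot_words -(prednK pq_gt0).
apply: perm_trans (perm_filter _ (perm_words_rcons _)) _.
rewrite filter_cat !filter_map.
rewrite (eq_filter (ballot_word_rcons_one d p q)) (eq_filter (ballot_word_rcons_zero d p q)).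
move: (p + q).-1 (prednK pq_gt0) => m def_m.
have filter_false s : [seq w <- s | false] = [::] by elim: s.
clear pq_gt0; case: p def_m => [|p]; case: q => [|q] // def_m; cbv beta iota;
  rewrite ?filter_false ?filter_andr ?leq0n /ballot_words; try case: ifP => _ //;
  by move: def_m; rewrite ?add0n ?addn0 ?addSn ?addnS => -[->].
Qed.

Lemma ballot_words_nil d p q : p + d < q -> ballot_words d p q = [::].
Proof.
move=> lt_pdq; apply/eqP; rewrite -[_ == _]negbK -has_filter; apply/hasPn => w _.
by apply/and3P => -[/eqP ones_w /eqP zeros_w /ballot_counts]; lia.
Qed.

(* Dyck-type words start with a 1: prepending 1 is a bijection from credit 1
   to credit 0. *)
Lemma ballot_words_cons p q :
  ballot_words 0 p.+1 q = [seq true :: w | w <- ballot_words 1 p q].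
Proof.
rewrite /ballot_words addSn [words _]/= filter_cat !filter_map.
have -> : [seq w <- words (p + q) | ballot_word 0 p.+1 q (false :: w)] = [::].
  apply/eqP; rewrite -[_ == _]negbK -has_filter.
  by apply/hasPn => w _; rewrite /ballot_word /= !andbF.
by rewrite cats0.
Qed.

(* A Dyck word ends with a 0, which can be removed bijectively. *)
Lemma ballot_words_last_zero p :
  perm_eq (ballot_words 0 p.+1 p.+1) [seq rcons w false | w <- ballot_words 0 p.+1 p].
Proof.
apply: perm_trans (ballot_words_rcons 0 _) _ => //.
by rewrite addn0 leqnn ballot_words_nil ?addn0.
Qed.

Definition nballot p q : nat := size (ballot_words 0 p q).

Lemma nballot_rec p q : 0 < p + q -> nballot p q =
  if q <= p then (if p is p'.+1 then nballot p' q else 0) + (if q is q'.+1 then nballot p q' else 0)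
  else 0.
Proof.
move=> pq_gt0; rewrite /nballot (perm_size (ballot_words_rcons 0 pq_gt0)) addn0.
by case: ifP => // _; rewrite size_cat !size_map; case: p {pq_gt0}; case: q.
Qed.

Lemma nballot_small p q : p < q -> nballot p q = 0.
Proof. by move=> lt_pq; rewrite /nballot ballot_words_nil ?addn0. Qed.

Lemma nballot_no_zeros p : nballot p 0 = 1.
Proof. by elim: p => [|p IH] //; rewrite nballot_rec // addn0. Qed.

Lemma nballot_binomial p q : q <= p ->
  nballot p q.+1 + 'C(p + q.+1, q) = 'C(p + q.+1, q.+1).
Proof.
elim: p q => [|p IHp] q le_qp; first by have -> : q = 0 by lia.
elim: q le_qp => [|q IHq] le_qp.
  rewrite nballot_rec //= nballot_no_zeros; have := IHp 0 (leq0n p).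
  by rewrite !addn1 !bin1 => -[->].
rewrite nballot_rec // ltnS; case: leqP => [le_pq | lt_qp]; last first.
  have := IHp q.+1 lt_qp; have := IHq (ltnW le_qp).
  rewrite !addSn !addnS !binS; lia.
have -> : q = p by lia.
by rewrite add0n -[in RHS]bin_sub; [congr 'C(_, _) | ]; lia.
Qed.

Lemma nballot_catalan n : nballot n n * n.+1 = 'C(n.*2, n).
Proof.
case: n => [|n] //; rewrite -addnn.
have := nballot_binomial (leqnSn n); have := mul_bin_left (n.+1 + n.+1) n.
have -> : n.+1 + n.+1 - n = n.+2 by lia.
nia.
Qed.

Lemma catalanE n : catalan n = ((nballot n n)%:R)%R.
Proof. by rewrite /catalan -nballot_catalan natrM mulfK // pnatr_eq0. Qed.

Lemma parity_cases n : ({a | n = a.*2} + {a | n = a.*2.+1})%type.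
Proof. by rewrite -[n]odd_double_half; case: (odd n); [right | left]; exists n./2. Qed.

Section SignedCount.
Local Open Scope ring_scope.

Definition sballot p q : int := \sum_(w <- ballot_words 0 p q) (-1) ^+ winv w.

(* The common recurrence of S and of its closed form: removing a final 1
   keeps winv, removing a final 0 changes it by the number p of ones. *)
Definition ballot_step (f : nat -> nat -> int) p q : int :=
  if (q <= p)%N then (if p is p'.+1 then f p' q else 0) +
                     (if q is q'.+1 then (-1) ^+ p * f p q' else 0)
  else 0.

Lemma sballot_rec p q : (0 < p + q)%N -> sballot p q = ballot_step sballot p q.
Proof.
move=> pq_gt0; rewrite /sballot /ballot_step (perm_big _ (ballot_words_rcons 0 pq_gt0)) addn0.
case: ifP => _; last by rewrite big_nil.
rewrite big_cat !big_map; congr (_ + _).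
  case: p {pq_gt0} => [|p]; first by rewrite big_nil.
  by apply: eq_bigr => w _; rewrite winv_rcons addn0.
case: q {pq_gt0} => [|q]; first by rewrite big_nil.
rewrite big_distrr; apply: eq_big_seq => w.
rewrite mem_filter => /andP [/and3P [/eqP ones_w _ _] _].
by rewrite winv_rcons ones_w exprD mulrC.
Qed.

Lemma ballot_step_unique f g : f 0%N 0%N = g 0%N 0%N ->
  (forall p q, (0 < p + q)%N -> f p q = ballot_step f p q) ->
  (forall p q, (0 < p + q)%N -> g p q = ballot_step g p q) ->
  forall p q, f p q = g p q.
Proof.
move=> fg00 f_rec g_rec p q; have [n] := ubnP (p + q); elim: n p q => // n IH p q.
rewrite ltnS => le_pq_n; case: (posnP (p + q)) => [pq_eq0 | pq_gt0].
  by have [-> ->] : p = 0%N /\ q = 0%N by lia.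
rewrite f_rec // g_rec // /ballot_step; case: ifP => // _.
by congr (_ + _); [case: p {pq_gt0} le_pq_n | case: q {pq_gt0} le_pq_n] => // m le_n;
  rewrite IH //; lia.
Qed.

Definition sballot_cf p q : int :=
  if odd p then (-1) ^+ q * (nballot p./2 q./2)%:R
  else if odd q then 0 else (nballot p./2.-1 q./2)%:R.

Lemma cf_odd_even a c : sballot_cf a.*2.+1 c.*2 = (nballot a c)%:R.
Proof. by rewrite /sballot_cf /= odd_double uphalf_double doubleK -signr_odd odd_double mul1r. Qed.

Lemma cf_odd_odd a c : sballot_cf a.*2.+1 c.*2.+1 = - (nballot a c)%:R.
Proof. by rewrite /sballot_cf /= odd_double !uphalf_double -signr_odd /= odd_double mulN1r. Qed.

Lemma cf_even_odd a c : sballot_cf a.*2 c.*2.+1 = 0.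
Proof. by rewrite /sballot_cf odd_double [odd _]/= odd_double. Qed.

Lemma cf_even_even a c : sballot_cf a.*2 c.*2 = (nballot a.-1 c)%:R.
Proof. by rewrite /sballot_cf !odd_double !doubleK. Qed.

Lemma cf_small p q : (p < q)%N -> sballot_cf p q = 0.
Proof.
case: (parity_cases p) => -[a ->]; case: (parity_cases q) => -[c ->] lt_pq;
  rewrite ?cf_odd_even ?cf_odd_odd ?cf_even_odd ?cf_even_even ?nballot_small ?oppr0 //;
  rewrite -?subn1; lia.
Qed.

Lemma cf_rec p q : (0 < p + q)%N -> sballot_cf p q = ballot_step sballot_cf p q.
Proof.
move=> pq_gt0; rewrite /ballot_step; case: leqP => [le_qp | lt_pq]; last exact: cf_small.
case: p le_qp pq_gt0 => [|p] le_qp; first by case: q le_qp.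
move=> _.
have sign_odd a : (-1) ^+ a.*2.+1 = -1 :> int by rewrite -signr_odd /= odd_double.
have sign_even a : (-1) ^+ a.*2.+2 = 1 :> int by rewrite -signr_odd /= odd_double.
case: (parity_cases p) le_qp => -[a ->]; case: (parity_cases q) => [[[|c] ->] | [c ->]] le_qp.
- by rewrite !cf_odd_even cf_even_even !nballot_no_zeros addr0.
- rewrite [in RHS]doubleS -[c.*2.+2]doubleS sign_odd mulN1r cf_odd_odd opprK.
  rewrite cf_odd_even cf_even_even; case: a le_qp => [|a] le_qp; first by rewrite doubleS in le_qp.
  by rewrite -natrD (@nballot_rec a.+1 c.+1) //= ifT //; rewrite -!muln2 in le_qp; lia.
- by rewrite sign_odd cf_odd_odd cf_even_odd cf_odd_even add0r mulN1r.
- by rewrite -doubleS cf_even_even cf_odd_even addr0.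
- rewrite [in RHS]doubleS -[c.*2.+2]doubleS sign_even -doubleS.
  by rewrite cf_even_even cf_odd_even cf_even_odd mulr0 addr0.
- by rewrite sign_even -doubleS cf_even_even cf_even_odd cf_odd_odd mul1r addNr.
Qed.

Lemma sballot_closed p q : sballot p q = sballot_cf p q.
Proof.
apply: (ballot_step_unique _ sballot_rec cf_rec).
by rewrite /sballot /= big_seq1.
Qed.

Lemma sballot_diag n :
  sballot n.+1 n.+1 = if odd n then 0 else - (nballot n./2 n./2)%:R.
Proof.
rewrite sballot_closed; case: (parity_cases n) => -[a ->].
  by rewrite cf_odd_odd odd_double doubleK.
by rewrite -doubleS cf_even_even nballot_small //= odd_double.
Qed.

End SignedCount.

Lemma count_parity (T : Type) (f : T -> nat) (b : bool) s :
  ((2 * count (fun x => odd (f x) == b) s)%:Z =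
   (size s)%:Z + (-1) ^+ b * \sum_(x <- s) (-1) ^+ f x)%R.
Proof.
elim: s => [|x s IH]; first by rewrite big_nil mulr0.
rewrite big_cons /= mulnDr PoszD {}IH -[((-1) ^+ f x)%R]signr_odd.
by case: (odd (f x)); case: b; rewrite /= ?expr0 ?expr1 ?mul1r ?mulN1r; lia.
Qed.

Lemma Ocount_words k m :
  Ocount k m = count (fun w => avoids_all k w && (odd (winv w) == true)) (words m).
Proof.
rewrite /Ocount (card_words (fun w => avoids_all k w && odd_word w)).
by apply: eq_count => w; rewrite /odd_word Gperm_inversions eqb_id.
Qed.

Lemma Ecount_words k m :
  Ecount k m = count (fun w => avoids_all k w && (odd (winv w) == false)) (words m).
Proof.
rewrite /Ecount (card_words (fun w => avoids_all k w && ~~ odd_word w)).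
by apply: eq_count => w; rewrite /odd_word Gperm_inversions eqbF_neg.
Qed.

Lemma count_avoids_even n (P : pred (seq bool)) :
  count (fun w => avoids_all n.+1 w && P w) (words (n + n)) = count P (ballot_words 0 n n).
Proof.
rewrite /ballot_words count_filter; apply: eq_in_count => w.
by rewrite mem_words => /eqP size_w; rewrite avoids_even // andbC.
Qed.

Lemma count_avoids_odd n (P : pred (seq bool)) :
  count (fun w => avoids_all n.+2 w && P w) (words (n.+1 + n)) =
  count P (ballot_words 0 n.+1 n) + count P (ballot_words 1 n n.+1).
Proof.
rewrite /ballot_words -addSnnS !count_filter -count_predUI.
rewrite [count (predI _ _) _](@eq_count _ _ pred0) => [|w /=]; last first.
  apply/negbTE/negP => /andP [/andP [_ /and3P [/eqP ones_w _ _]] /andP [_ /and3P [/eqP ones_w' _ _]]].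
  lia.
rewrite count_pred0 addn0; apply: eq_in_count => w.
by rewrite mem_words => /eqP size_w; rewrite avoids_odd // /= -andb_orr andbC.
Qed.

(* Both bijections onto Dyck words shift winv by p+1. *)
Lemma count_parity_last_zero p b :
  count (fun w => odd (winv w) == b) (ballot_words 0 p.+1 p) =
  count (fun w => odd (winv w) == b (+) odd p.+1) (ballot_words 0 p.+1 p.+1).
Proof.
rewrite ((permP (ballot_words_last_zero p)) _) count_map; apply: eq_in_count => w.
rewrite mem_filter => /andP [/and3P [/eqP ones_w _ _] _] /=.
by rewrite winv_rcons ones_w oddD /=; case: (odd (winv w)); case: b; case: (odd p).
Qed.

Lemma count_parity_first_one p b :
  count (fun w => odd (winv w) == b) (ballot_words 1 p p.+1) =
  count (fun w => odd (winv w) == b (+) odd p.+1) (ballot_words 0 p.+1 p.+1).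
Proof.
rewrite ballot_words_cons count_map; apply: eq_in_count => w.
rewrite mem_filter => /andP [/and3P [_ /eqP zeros_w _] _] /=.
by rewrite zeros_w oddD /=; case: (odd (winv w)); case: b; case: (odd p).
Qed.

Lemma natr_half (x y : nat) : (2 * x)%N = y -> (x%:R = y%:R / 2 :> rat)%R.
Proof. by move=> <-; rewrite natrM; field. Qed.

(* Write k = n+2, so that the avoiders are governed by the Dyck words D of
   semilength n+1, whose number is C_(n+1) and whose signed sum is given by
   [sballot_diag]. *)
Theorem proposition4p2 (k : nat) (hk : (2 <= k)%N) :
  ((Ocount k (k.*2 - 2))%:R = (catalan k.-1 + catalan_half_km2 k) / 2 :> rat)%R
  /\ Ocount k (k.*2 - 3) = (2 * Ecount k (k.*2 - 2))%N.
Proof.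
case: k hk => [|[|n]] // _.
have -> : n.+2.*2 - 2 = n.+1 + n.+1 by rewrite -addnn; lia.
have -> : n.+2.*2 - 3 = n.+1 + n by rewrite -addnn; lia.
rewrite !Ocount_words Ecount_words !count_avoids_even count_avoids_odd.
rewrite count_parity_last_zero count_parity_first_one /=.
(* Everything is now a parity count over D. *)
have parity b := count_parity winv b (ballot_words 0 n.+1 n.+1).
rewrite -/(sballot _ _) -/(nballot _ _) sballot_diag in parity.
rewrite /catalan_half_km2 /= !catalanE.
case: (odd n) parity => /= parity; split; last by rewrite addnn mul2n.
- by rewrite addr0; apply: natr_half; move: (parity true); rewrite mulr0 addr0 => -[].
- have := parity true; have := parity false; rewrite !mulr0 !addr0 => -[] -[]; lia.
- rewrite !subSS subn0 -natrD; apply: natr_half.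
  by move: (parity true); rewrite expr1 mulN1r opprK natz -PoszD => -[].
Qed.
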